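(* For every $n\in\mathbb{N}$, \[ \mathcal{M}^{(3)}(n)=\min_{1\le s\le t\le n}\mathcal{M}^{(3)}(n,s,t)=\Bigl\lfloor\frac{n^2-18n+101}{108}\Bigr\rfloor+\begin{cases}1,& n\equiv 36\pmod{54},\\ -1,& n\equiv 30 \text{ or } n\equiv 42\pmod{54},\\ 0,&\text{otherwise}.\end{cases} \]
   Context: For real $a>0$ and integers $1\le s\le t\le n$, $\mathcal{M}^{(a)}(n,s,t)$ is the number of ordered triples $T=(x,y,x+\lfloor ay\rfloor)\in\{1,\dots,n\}^3$ such that $T\in(\{1,\dots,s\}\cup\{t+1,\dots,n\})^3$ or $T\in\{s+1,\dots,t\}^3$ (monochromatic generalized Schur triples under the coloring $R^sB^{t-s}R^{n-t}$). For $a=3$ the triples are $(x,y,x+3y)$. *)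

From mathcomp Require Import all_boot all_algebra.
Set Implicit Arguments. Unset Strict Implicit. Unset Printing Implicit Defensive.

(* Coloring R^s B^(t-s) R^(n-t): k is red iff k <= s or t < k. *)
Definition isRed (s t k : nat) : bool := (k <= s) || (t < k).

Definition mono (s t x y z : nat) : bool :=
  (isRed s t x && isRed s t y && isRed s t z)
  || (~~ isRed s t x && ~~ isRed s t y && ~~ isRed s t z).

Definition M3 (n s t : nat) : nat :=
  \sum_(x < n.+1) \sum_(y < n.+1)
     [&& 1 <= x, 1 <= y, x + 3 * y <= n & mono s t x y (x + 3 * y)].

Definition M3corr (n : nat) : int :=
  if n %% 54 == 36 then 1%R
  else if (n %% 54 == 30) || (n %% 54 == 42) then (-1)%R else 0%R.

Definition M3formula (n : nat) : int :=
  (Posz ((n ^ 2 + 101 - 18 * n) %/ 108)%N + M3corr n)%R.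

From mathcomp Require Import all_boot all_algebra zify ring.
Import GRing.Theory Num.Theory.
Set Implicit Arguments. Unset Strict Implicit. Unset Printing Implicit Defensive.

(* Let T(m) be the number of pairs x, y >= 1 with x + 3y <= m, so that
   6 T(m) = m^2 - 3m + 2 [3 does not divide m].  Sorting the monochromatic
   triples of R^s B^(t-s) R^(n-t) by the blocks containing x, y and x + 3y gives
     M(n,s,t) >= T(s) + T(t-4s) + T(n-t) - T(n-t-3s) + T(n-4t),
   with equality when 4s <= t and n < 3t + 4.
   If n - t <= 3s + 3 the bound is at least T(a) + T(b) + T(c) with 4a + b + c = n,
   and completing squares gives
     216 (T(a) + T(b) + T(c)) = 2 (n^2 - 18n + 101) - 283 + e^2 + 18 (b - c)^2 + 72 K,
   where e = 18a + 9 - 4n is odd and K counts a, b, c not divisible by 3; bounding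
   this defect by residues modulo 54 yields the floor and its correction term.
   If n - t > 3s + 3 the bound is a piecewise quadratic in s, t, n - t which is
   concave in one variable on each piece, so its values at the ends of the
   ranges show that it exceeds the formula.
   Conversely, colourings with equality are found by search for 4 <= n < 58 and
   carried to n + 54q by (s, t) |-> (s + 12q, t + 51q). *)

(* T(m): the pairs x, y >= 1 with x + 3y = m + 1 are the m %/ 3 values of y. *)
Fixpoint schur3 (m : nat) : nat := if m is m'.+1 then schur3 m' + m' %/ 3 else 0.

Lemma schur3_le3 m : m <= 3 -> schur3 m = 0.
Proof. by case: m => [|[|[|[|]]]]. Qed.

Lemma schur3_add3 m : schur3 (m + 3) = schur3 m + m.
Proof. rewrite !addnS addn0 /=; lia. Qed.

Lemma schur3_sub3 m : schur3 m = schur3 (m - 3) + (m - 3).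
Proof.
case: (leqP m 3) => [le_m3 | /ltnW/subnK {1}<-]; last by rewrite schur3_add3.
by rewrite (eqP le_m3) schur3_le3.
Qed.

Lemma schur3E m : 6 * schur3 m + 3 * m = m ^ 2 + 2 * (m %% 3 != 0).
Proof. by elim: m => [|m IH] //=; lia. Qed.

Lemma schur3_mono : {homo schur3 : m n / m <= n}.
Proof. by apply: (homo_leq leqnn leq_trans) => m /=; apply: leq_addr. Qed.

Lemma schur3D3 m p : 2 * schur3 (m + 3 * p) + 3 * p = 2 * schur3 m + p * (2 * m + 3 * p).
Proof.
elim: p => [|p IH]; first by rewrite !(muln0, addn0, mul0n).
have -> : m + 3 * p.+1 = m + 3 * p + 3 by lia.
by rewrite schur3_add3; lia.
Qed.

Lemma sum_schur3 m k : \sum_(i < k) (m - 3 * i.+1) + schur3 (m - 3 * k) = schur3 m.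
Proof.
elim: k => [|k IH]; first by rewrite big_ord0 subn0.
rewrite big_ord_recr /= -IH [schur3 (m - 3 * k)]schur3_sub3.
have -> : m - 3 * k - 3 = m - 3 * k.+1 by lia.
by rewrite -addnA (addnC (m - _)).
Qed.

Lemma sum_interval N lo hi (g : nat -> nat) : lo <= hi <= N ->
  \sum_(y < N.+1) (lo < y <= hi) * g y = \sum_(i < hi - lo) g (lo + i.+1).
Proof.
move=> /andP[le_lo_hi le_hi_N]; set f := fun y => (lo < y <= hi) * g y.
have zero_out a b : (forall y, a <= y < b -> (lo < y <= hi) = false) ->
    \sum_(a <= y < b) f y = 0.
  by move=> out; rewrite big1_seq // => y /andP[_]; rewrite mem_index_iota /f => /out ->.
rewrite -(big_mkord xpredT f) (big_cat_nat (leq0n lo.+1)) /=; last by lia.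
rewrite (big_cat_nat (_ : lo.+1 <= hi.+1) (_ : hi.+1 <= N.+1)) //=.
rewrite (zero_out 0 lo.+1) ?(zero_out hi.+1 N.+1) ?add0n ?addn0 => [|y|y]; try lia.
rewrite -{1}[lo.+1]add0n big_addn subSS big_mkord.
apply: eq_bigr => i _; rewrite /f (addnC i) addSnnS.
have -> : lo < lo + i.+1 <= hi by have := ltn_ord i; lia.
by rewrite mul1n.
Qed.

Lemma count_interval N lo hi : \sum_(x < N.+1) (lo < x <= hi) = minn hi N - lo.
Proof.
elim: N => [|N IH]; first by rewrite big_ord_recr big_ord0 /=; lia.
by rewrite big_ord_recr /= IH; lia.
Qed.

Definition in_box (ly hy lx H x y : nat) : bool :=
  [&& ly < y <= hy, lx < x & x <= H - 3 * y].

Lemma count_box N ly hy lx H : ly <= hy <= N -> H <= N ->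
  \sum_(x < N.+1) \sum_(y < N.+1) in_box ly hy lx H x y + schur3 (H - lx - 3 * hy)
  = schur3 (H - lx - 3 * ly).
Proof.
move=> le_ly_hy_N le_H_N; rewrite exchange_big /=.
rewrite (eq_bigr (fun y : 'I_N.+1 => (ly < y <= hy) * (H - lx - 3 * y))) => [|y _].
  rewrite (@sum_interval _ _ _ (fun y => H - lx - 3 * y)) //.
  rewrite -(sum_schur3 (H - lx - 3 * ly) (hy - ly)).
  by congr (_ + schur3 _); [apply: eq_bigr => i _ | ]; lia.
rewrite /in_box; case: (ly < y <= hy); last by rewrite big1.
by rewrite count_interval; lia.
Qed.

(* The triples inside [1, s], inside the blue block (s, t], with y <= s < t < x,
   and inside (t, n].  The other red triples have x, y <= s < t < x + 3y, which
   needs t < 4s, or x <= s < t < y, which needs n >= 3t + 4. *)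
Definition boxes (n s t x y : nat) : nat :=
  in_box 0 s 0 s x y + in_box s t s t x y + in_box 0 s t n x y + in_box t n t n x y.

Lemma sum_boxes n s t : s <= t <= n ->
  \sum_(x < n.+1) \sum_(y < n.+1) boxes n s t x y + schur3 (n - t - 3 * s)
  = schur3 s + schur3 (t - 4 * s) + schur3 (n - t) + schur3 (n - 4 * t).
Proof.
move=> le_stn.
have := @count_box n t n t n; have := @count_box n 0 s t n.
have := @count_box n s t s t; have := @count_box n 0 s 0 s.
have -> : s - 0 - 3 * s = 0 by lia.
have -> : s - 0 - 3 * 0 = s by lia.
have -> : t - s - 3 * t = 0 by lia.
have -> : t - s - 3 * s = t - 4 * s by lia.
have -> : n - t - 3 * 0 = n - t by lia.
have -> : n - t - 3 * n = 0 by lia.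
have -> : n - t - 3 * t = n - 4 * t by lia.
move=> box1 box2 box3 box4.
rewrite -box1 -?box2 -?box3 -?box4 /= ?addn0; try lia.
rewrite /boxes; under eq_bigr do rewrite !big_split; rewrite !big_split /=.
by rewrite -!addnA [schur3 _ + _]addnC.
Qed.

Lemma boxes_le_mono n s t x y : 1 <= s <= t -> t <= n ->
  boxes n s t x y <= [&& 1 <= x, 1 <= y, x + 3 * y <= n & mono s t x y (x + 3 * y)].
Proof.
rewrite /boxes /in_box /mono /isRed.
by case: (leqP x s); case: (leqP y s); case: (leqP x t); case: (leqP y t) => /=; lia.
Qed.

Lemma boxes_eq_mono n s t x y : 1 <= s -> 4 * s <= t <= n -> n < 3 * t + 4 ->
  boxes n s t x y = [&& 1 <= x, 1 <= y, x + 3 * y <= n & mono s t x y (x + 3 * y)].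
Proof.
rewrite /boxes /in_box /mono /isRed.
by case: (leqP x s); case: (leqP y s); case: (leqP x t); case: (leqP y t) => /=; lia.
Qed.

Lemma M3_ge_schur3 n s t : 1 <= s -> s <= t -> t <= n ->
  schur3 s + schur3 (t - 4 * s) + schur3 (n - t) + schur3 (n - 4 * t)
  <= M3 n s t + schur3 (n - t - 3 * s).
Proof.
move=> s_ge1 le_st le_tn; rewrite -sum_boxes ?leq_add2r; last by lia.
by apply: leq_sum => x _; apply: leq_sum => y _; apply: boxes_le_mono; lia.
Qed.

Lemma M3_eq_schur3 n s t : 1 <= s -> 4 * s <= t <= n -> n < 3 * t + 4 ->
  M3 n s t + schur3 (n - t - 3 * s)
  = schur3 s + schur3 (t - 4 * s) + schur3 (n - t) + schur3 (n - 4 * t).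
Proof.
move=> s_ge1 le_4stn n_lt; rewrite -sum_boxes; last by lia.
by congr (_ + _); apply: eq_bigr => x _; apply: eq_bigr => y _; rewrite boxes_eq_mono.
Qed.

Lemma M3_eq_schur3_sum n s t : 1 <= s -> 4 * s <= t <= n ->
  n - t <= 3 * s + 3 -> n < 3 * t + 4 ->
  M3 n s t = schur3 s + schur3 (t - 4 * s) + schur3 (n - t).
Proof.
move=> s_ge1 le_4stn short_tail n_lt; have := M3_eq_schur3 s_ge1 le_4stn n_lt.
by rewrite (@schur3_le3 (n - t - 3 * s)) ?(@schur3_le3 (n - 4 * t)); lia.
Qed.

Section IntBounds.
Local Open Scope ring_scope.

(* n^2 - 18n - 6 is the numerator n^2 - 18n + 101 of M3formula minus 107. *)
Lemma M3formula_le n (S : int) :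
  n%:Z ^+ 2 - 18 * n%:Z - 6 + 108 * M3corr n <= 108 * S -> M3formula n <= S.
Proof.
have sq_ge : (18 * n <= n ^ 2 + 101)%N by have := sqr_ge0 (n%:Z - 9); lia.
by have := leq_divM (n ^ 2 + 101 - 18 * n) 108; rewrite /M3formula; lia.
Qed.

Definition nz3 (m : nat) : int := (m %% 3 != 0)%N.

Lemma schur3E_int m : 6 * (schur3 m)%:Z = m%:Z ^+ 2 - 3 * m%:Z + 2 * nz3 m.
Proof. by have := schur3E m; rewrite /nz3; lia. Qed.

Lemma schur3_lb m : m%:Z ^+ 2 - 3 * m%:Z <= 6 * (schur3 m)%:Z.
Proof. by rewrite schur3E_int /nz3; lia. Qed.

Definition defect (a b c : nat) : int :=
  ((18 * a + 9)%:Z - 4 * (4 * a + b + c)%:Z) ^+ 2 + 18 * (b%:Z - c%:Z) ^+ 2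
  + 72 * (nz3 a + nz3 b + nz3 c).

Lemma schur3_sum_defect a b c (n := (4 * a + b + c)%N) :
  216 * (schur3 a + schur3 b + schur3 c)%:Z
  = 2 * (n%:Z ^+ 2 - 18 * n%:Z + 101) - 283 + defect a b c.
Proof.
have -> : 216 * (schur3 a + schur3 b + schur3 c)%:Z = 36 * (6 * (schur3 a)%:Z)
    + 36 * (6 * (schur3 b)%:Z) + 36 * (6 * (schur3 c)%:Z) by rewrite !PoszD; ring.
by rewrite !schur3E_int /defect /n !PoszD; ring.
Qed.

Lemma sqr_ge_out (x k : int) : 0 <= k -> x <= - k \/ k <= x -> k ^+ 2 <= x ^+ 2.
Proof. by move=> k_ge0 [x_le | le_x]; nia. Qed.

Lemma defect_ge a b c : 69 + 216 * M3corr (4 * a + b + c) <= defect a b c.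
Proof.
rewrite /defect /nz3; set n := (4 * a + b + c)%N.
set e := (_ - _ : int); set d := (b%:Z - c%:Z).
have e2 := sqr_ge0 e; have d2 := sqr_ge0 d.
rewrite /M3corr; case: ifP => [/eqP r36 | _]; last case: ifP => [_ | /norP[r30 r42] ].
- have [e_out | e9] : (e <= -27 \/ 27 <= e) \/ (e = -9 \/ e = 9) by rewrite /e; lia.
    by have := sqr_ge_out (k := 27) isT e_out; lia.
  have -> : e ^+ 2 = 81 by case: e9 => ->.
  have [d0 | d_out] : d = 0 \/ d <= -2 \/ 2 <= d by rewrite /d /e in e9 *; lia.
    by rewrite /d /e in d0 e9; lia.
  by have := sqr_ge_out (k := 2) isT d_out; rewrite /d /e in e9 *; lia.
- by lia.
have [K_pos | [a3 [b3 c3]]] : (0 < (a %% 3 != 0) + (b %% 3 != 0) + (c %% 3 != 0))%N \/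
    (a %% 3 = 0 /\ b %% 3 = 0 /\ c %% 3 = 0)%N by lia.
  by lia.
have [d0 | d_out] : d = 0 \/ d <= -3 \/ 3 <= d by rewrite /d; lia.
  have [e_out | e3] : (e <= -9 \/ 9 <= e) \/ (e = -3 \/ e = 3) by rewrite /e; lia.
    by have := sqr_ge_out (k := 9) isT e_out; lia.
  by rewrite /e /d in e3 d0; lia.
by have := sqr_ge_out (k := 3) isT d_out; lia.
Qed.

Lemma schur3_sum_ge a b c :
  M3formula (4 * a + b + c) <= (schur3 a + schur3 b + schur3 c)%:Z.
Proof.
apply: M3formula_le; have := defect_ge a b c; have := schur3_sum_defect a b c.
by lia.
Qed.

Lemma quadratic_concave_ge0 (a b c x lo hi : int) : 0 <= c -> lo <= x <= hi ->
  0 <= a + b * lo - c * lo ^+ 2 -> 0 <= a + b * hi - c * hi ^+ 2 ->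
  0 <= a + b * x - c * x ^+ 2.
Proof.
move=> c_ge0 /andP[lo_x x_hi] f_lo f_hi.
have [b_ge | b_lt] := lerP (c * (x + lo)) b.
- have : 0 <= (x - lo) * (b - c * (x + lo)) by apply: mulr_ge0; lia.
  by nia.
- have : 0 <= (hi - x) * (c * (x + hi) - b) by apply: mulr_ge0; nia.
  by nia.
Qed.

(* 108 times the lower bound of M3 for u = n - t >= 3s, minus n^2 - 18n + 209:
   s^2 - 3s, X, Y stand for 6 T(s), 6 T(t - 4s), 6 T(u - 3t), and
   6su - 9s^2 - 9s = 6 T(u) - 6 T(u - 3s). *)
Definition excess (s t u X Y : int) : int :=
  18 * (s ^+ 2 - 3 * s + X + Y + 6 * s * u - 9 * s ^+ 2 - 9 * s)
  - ((t + u) ^+ 2 - 18 * (t + u) + 209).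

Lemma excess_blue_tail s t u : 1 <= s -> 4 * s <= t -> 3 * t <= u ->
  0 <= excess s t u ((t - 4 * s) ^+ 2 - 3 * (t - 4 * s)) ((u - 3 * t) ^+ 2 - 3 * (u - 3 * t)).
Proof.
move=> s_ge1 le_4s_t le_3t_u; rewrite /excess.
have := sqr_ge0 (t - 4 * s - 2 * (u - 3 * t)); have := sqr_ge0 (u - 3 * t).
have : 0 <= s * (t - 4 * s) by apply: mulr_ge0; lia.
have : 0 <= (s - 1) * (u - 3 * t) by apply: mulr_ge0; lia.
have : 0 <= (s - 1) * s by apply: mulr_ge0; lia.
by lia.
Qed.

Lemma excess_blue s t u : 1 <= s -> 4 * s <= t -> 3 * s + 4 <= u <= 3 * t ->
  0 <= excess s t u ((t - 4 * s) ^+ 2 - 3 * (t - 4 * s)) 0.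
Proof.
move=> s_ge1 le_4s_t u_range.
have : 0 <= (-144 * s * t + 144 * s ^+ 2 + 17 * t ^+ 2 - 36 * t - 209)
    + (108 * s - 2 * t + 18) * u - 1 * u ^+ 2.
  apply: (quadratic_concave_ge0 (lo := 3 * s + 4) (hi := 3 * t) ler01 u_range).
    have := sqr_ge0 (34 * t - 150 * s - 44).
    have : 0 <= (s - 1) * s by apply: mulr_ge0; lia.
    by lia.
  have : 0 <= s * (t - 4 * s) by apply: mulr_ge0; lia.
  have : 0 <= (s - 1) * s by apply: mulr_ge0; lia.
  by have := sqr_ge0 (t - 4 * s); lia.
by rewrite /excess; lia.
Qed.

Lemma excess_tail s t u : 1 <= s <= t -> t < 4 * s -> 3 * s + 4 <= u -> 3 * t <= u ->
  0 <= excess s t u 0 ((u - 3 * t) ^+ 2 - 3 * (u - 3 * t)).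
Proof.
move=> le_1st lt_t_4s u_ge le_3t_u.
have [w w_ge0 def_u] : exists2 w, 0 <= w & u = 3 * t + w by exists (u - 3 * t); lia.
rewrite {}def_u in u_ge *.
have : 0 <= (108 * s * w - 144 * s ^+ 2 + 17 * w ^+ 2 - 216 * s - 36 * w - 209)
    + (324 * s - 8 * w + 72) * t - 16 * t ^+ 2.
  have : 0 <= (s - 1) * w by apply: mulr_ge0; lia.
  have : 0 <= (s - 1) * s by apply: mulr_ge0; lia.
  have [w_ge4 | w_le3] := lerP 4 w.
    have : 0 <= (w - 4) * w by apply: mulr_ge0; lia.
    by move=> *; apply: (quadratic_concave_ge0 (lo := s) (hi := 4 * s - 1)); lia.
  (* here 3s + 4 <= 3t + w forces s < t *)
  by move=> *; apply: (quadratic_concave_ge0 (lo := s + 1) (hi := 4 * s - 1)); lia.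
by rewrite /excess; lia.
Qed.

Lemma excess_short s t u : 1 <= s <= t -> t < 4 * s -> 3 * s + 4 <= u < 3 * t ->
  0 <= excess s t u 0 0.
Proof.
move=> le_1st lt_t_4s u_range.
have : 0 <= (-144 * s ^+ 2 - t ^+ 2 - 216 * s + 18 * t - 209)
    + (108 * s - 2 * t + 18) * u - 1 * u ^+ 2.
  apply: (quadratic_concave_ge0 (lo := 3 * s + 4) (hi := 3 * t - 1) ler01); first by lia.
    have : 0 <= (t - s) * (4 * s - 1 - t) by apply: mulr_ge0; lia.
    have : 0 <= s * (4 * s - 1 - t) by apply: mulr_ge0; lia.
    by lia.
  have : 0 <= (t - s - 2) * (4 * s - 1 - t) by apply: mulr_ge0; lia.
  have : 0 <= s * (t - s - 2) by apply: mulr_ge0; lia.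
  by lia.
by rewrite /excess; lia.
Qed.

Lemma excess_ge0 (s t u X Y : int) :
  1 <= s <= t -> 3 * s + 4 <= u -> 0 <= X -> 0 <= Y ->
  (4 * s <= t -> (t - 4 * s) ^+ 2 - 3 * (t - 4 * s) <= X) ->
  (3 * t <= u -> (u - 3 * t) ^+ 2 - 3 * (u - 3 * t) <= Y) ->
  0 <= excess s t u X Y.
Proof.
move=> le_1st u_ge X_ge0 Y_ge0 X_ge Y_ge.
have mono X' Y' : X' <= X -> Y' <= Y -> 0 <= excess s t u X' Y' -> 0 <= excess s t u X Y.
  by rewrite /excess; lia.
have [le_4s_t | lt_t_4s] := lerP (4 * s) t; have [le_3t_u | lt_u_3t] := lerP (3 * t) u.
- by apply: (mono _ _ (X_ge le_4s_t) (Y_ge le_3t_u)); apply: excess_blue_tail; lia.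
- by apply: (mono _ _ (X_ge le_4s_t) Y_ge0); apply: excess_blue; lia.
- by apply: (mono _ _ X_ge0 (Y_ge le_3t_u)); apply: excess_tail; lia.
- by apply: (mono _ _ X_ge0 Y_ge0); apply: excess_short; lia.
Qed.

Lemma M3_ge_long_tail n s t : (1 <= s)%N -> (s <= t)%N -> (3 * s + 3 < n - t)%N ->
  n%:Z ^+ 2 - 18 * n%:Z + 209 <= 108 * (M3 n s t)%:Z.
Proof.
move=> s_ge1 le_st long_tail.
have le_tn : (t <= n)%N by lia.
have := M3_ge_schur3 s_ge1 le_st le_tn.
have [v v_ge4 ->] : exists2 v, (4 <= v)%N & n = (t + (v + 3 * s))%N.
  by exists (n - t - 3 * s)%N; lia.
rewrite addKn.
have [-> ->] : (v + 3 * s - 3 * s = v /\ t + (v + 3 * s) - 4 * t = v + 3 * s - 3 * t)%N by lia.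
move=> M3_ge; have shift := schur3D3 v s.
have : 0 <= excess s t (v + 3 * s)%N
    (6 * (schur3 (t - 4 * s))%:Z) (6 * (schur3 (v + 3 * s - 3 * t))%:Z).
  apply: excess_ge0 => [||||le_4s_t|le_3t_u]; try lia.
    by rewrite (_ : t%:Z - 4 * s%:Z = (t - 4 * s)%N) ?schur3_lb //; lia.
  by rewrite (_ : Posz (v + 3 * s) - 3 * t%:Z = (v + 3 * s - 3 * t)%N) ?schur3_lb //; lia.
by have := schur3_lb s; rewrite /excess !PoszD; lia.
Qed.

Lemma M3formula_le_M3 n s t : (1 <= s)%N -> (s <= t)%N -> (t <= n)%N ->
  M3formula n <= (M3 n s t)%:Z.
Proof.
move=> s_ge1 le_st le_tn.
have [short_tail | long_tail] := leqP (n - t) (3 * s + 3); last first.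
  apply: M3formula_le; have := M3_ge_long_tail s_ge1 le_st long_tail.
  by rewrite /M3corr; case: ifP => _; [|case: ifP => _]; lia.
have := M3_ge_schur3 s_ge1 le_st le_tn; rewrite (@schur3_le3 (n - t - 3 * s)); last by lia.
(* when t < 4s, shrink s to t %/ 4 so that 4 s' + (t - 4 s') + (n - t) = n *)
pose s' := minn s (t %/ 4).
have le_s' : (schur3 s' + schur3 (t - 4 * s') <= schur3 s + schur3 (t - 4 * s))%N.
  rewrite /s'; case: (leqP s (t %/ 4)) => // lt_t4_s.
  rewrite (@schur3_le3 (t - 4 * (t %/ 4))); last by lia.
  by have := schur3_mono (ltnW lt_t4_s); lia.
have := schur3_sum_ge s' (t - 4 * s') (n - t).
by rewrite (_ : 4 * s' + (t - 4 * s') + (n - t) = n)%N; [lia | rewrite /s'; lia].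
Qed.

Lemma M3formula_shift r q :
  M3formula (r + 54 * q) = M3formula r + (27 * q * q + q * r - 9 * q)%N.
Proof.
rewrite /M3formula /M3corr (_ : (r + 54 * q) %% 54 = r %% 54)%N; last by lia.
have sq_ge : (18 * r <= r ^ 2 + 101)%N by have := sqr_ge0 (r%:Z - 9); lia.
have -> : ((r + 54 * q) ^ 2 + 101 - 18 * (r + 54 * q)
    = (27 * q * q + q * r - 9 * q) * 108 + (r ^ 2 + 101 - 18 * r))%N.
  have : (9 * q <= 27 * q * q)%N by nia.
  by nia.
by rewrite divnMDl //; lia.
Qed.

End IntBounds.

Definition good_coloring (r s t : nat) : bool :=
  [&& 1 <= s, 4 * s <= t <= r, r - t <= 3 * s + 3, r < 3 * t + 4 &
      Posz (schur3 s + schur3 (t - 4 * s) + schur3 (r - t)) == M3formula r].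

Lemma good_coloring_small :
  all (fun r => has (fun s => has (good_coloring r s) (iota 0 r.+1)) (iota 1 r)) (iota 4 54).
Proof. vm_cast_no_check (erefl true). Qed.

(* (s, t - 4s, r - t) grows by (12q, 3q, 3q), and 4 * 12 + 3 + 3 = 54. *)
Lemma good_coloring_shift q r s t :
  good_coloring r s t -> good_coloring (r + 54 * q) (s + 12 * q) (t + 51 * q).
Proof.
case/and5P=> s_ge1 /andP[le_4s_t le_tr] short_tail lt_r /eqP opt.
apply/and5P; split; try lia.
rewrite M3formula_shift -opt.
have -> : s + 12 * q = s + 3 * (4 * q) by lia.
have -> : t + 51 * q - 4 * (s + 3 * (4 * q)) = (t - 4 * s) + 3 * q by lia.
have -> : r + 54 * q - (t + 51 * q) = (r - t) + 3 * q by lia.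
have := schur3D3 s (4 * q); have := schur3D3 (t - 4 * s) q; have := schur3D3 (r - t) q.
have : r = 4 * s + (t - 4 * s) + (r - t) by lia.
move: (t - 4 * s) (r - t) => b c -> *.
have q_le_qq : q <= q * q by nia.
by apply/eqP; lia.
Qed.

Lemma M3_attains_formula n : 1 <= n ->
  exists s t, [/\ 1 <= s, s <= t, t <= n & Posz (M3 n s t) = M3formula n].
Proof.
move=> n_ge1; have [n_le3 | n_ge4] := leqP n 3.
  exists 1, 1; split=> //.
  have -> : M3 n 1 1 = 0.
    by rewrite /M3 big1 // => x _; rewrite big1 // => y _; lia.
  by case: n n_ge1 n_le3 => [|[|[|[|]]]].
have [q [r [-> r_range]]] : exists q r, n = r + 54 * q /\ 4 <= r < 58.
  by exists ((n - 4) %/ 54), (4 + (n - 4) %% 54); lia.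
have /allP/(_ r) := good_coloring_small; rewrite mem_iota.
case/(_ _)/hasP => [|s _ /hasP[t _ /(good_coloring_shift q)]]; first by lia.
case/and5P=> s_ge1 le_4stn short_tail lt_n /eqP opt.
by exists (s + 12 * q), (t + 51 * q); split; rewrite ?M3_eq_schur3_sum //; lia.
Qed.

Theorem theorem4p3 (n : nat) : 1 <= n ->
  (exists s t, [/\ 1 <= s, s <= t, t <= n & Posz (M3 n s t) = M3formula n]) /\
  (forall s t, 1 <= s -> s <= t -> t <= n -> (M3formula n <= Posz (M3 n s t))%R).
Proof. by move=> n_ge1; split; [exact: M3_attains_formula | exact: M3formula_le_M3]. Qed.
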